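(* Let $\{x_k\}$ be an infinite sequence generated by Algorithm SInexPD (the Subgradient-InexP method with the dynamic stepsize rule), under the standing assumptions. Then $\inf_{k\ge0}f(x_k)=f^*$, where $f^*=\inf_{x\in C}f(x)$ (possibly $-\infty$).
   Context: Problem: minimize a convex $f:\mathbb{R}^n\to\mathbb{R}$ over a nonempty closed convex $C\subset\mathbb{R}^n$; $f^*:=\inf_{x\in C}f(x)$. For $\epsilon\ge0$, $\partial_\epsilon f(x):=\{s: f(y)\ge f(x)+\langle s,y-x\rangle-\epsilon\ \forall y\}$; $\partial f=\partial_0f$. Relative error tolerance function: any $\varphi_{\gamma,\theta,\lambda}:(\mathbb{R}^n)^3\to[0,\infty)$ with $\varphi_{\gamma,\theta,\lambda}(u,v,w)\le\gamma\|v-u\|^2+\theta\|w-v\|^2+\lambda\|w-u\|^2$; for $u\in C$, $\mathcal{P}_C(\varphi_{\gamma,\theta,\lambda},u,v):=\{w\in C:\langle v-w,z-w\rangle\le\varphi_{\gamma,\theta,\lambda}(u,v,w)\ \forall z\in C\}$. Standing assumptions: nonnegative sequences $\gamma_k\in[0,\bar\gamma)$, $\theta_k\in[0,\bar\theta)$, $\lambda_k\in[0,\bar\lambda)$ with $\bar\gamma\ge0$, $\bar\theta,\bar\lambda\in[0,1/2)$; $\nu:=\frac{1+2\bar\gamma}{1-2\bar\lambda}$; fixed $\mu\ge0$ and $0<\underline\beta\le\bar\beta<\frac{2}{2\mu+\nu}$. Algorithm SInexPD. Step 0: choose $x_0\in C$, $\delta_0>0$, $R>0$; set $k=0$, $\sigma_0=0$,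 $f^{rec}_{-1}=+\infty$, $\ell=0$, $k(0)=0$. Step 1: if $f(x_k)<f^{rec}_{k-1}$ set $f^{rec}_k=f(x_k)$, $x^{rec}_k=x_k$; else $f^{rec}_k=f^{rec}_{k-1}$, $x^{rec}_k=x^{rec}_{k-1}$. Step 2: if $0\in\partial f(x_k)$ stop. Step 3: if $f(x_k)\le f^{rec}_{k(\ell)}-\tfrac12\delta_\ell$, set $k(\ell+1)=k$, $\sigma_k=0$, $\delta_{\ell+1}=\delta_\ell$, $\ell\leftarrow\ell+1$ and go to Step 5. Step 4: if $\sigma_k>R$, set $k(\ell+1)=k$, $\sigma_k=0$, $\delta_{\ell+1}=\tfrac12\delta_\ell$, $x_k=x^{rec}_k$, $\ell\leftarrow\ell+1$. Step 5: set $f^{lev}_k:=f^{rec}_{k(\ell)}-\delta_\ell$; select $\beta_k\in[\underline\beta,\bar\beta]$ and $\epsilon_k$ with $\{\epsilon_k\}$ nonincreasing and $0<\epsilon_k\le\mu\beta_k[f(x_k)-f^{lev}_k]$; choose nonzero $s_k\in\partial_{\epsilon_k}f(x_k)$, set $\tilde t_k:=\beta_k\frac{f(x_k)-f^{lev}_k}{\|s_k\|}$, $t_k:=\tilde t_k/\|s_k\|$, and take any $x_{k+1}\in\mathcal{P}_C(\varphi_{\gamma_k,\theta_k,\lambda_k},x_k,x_k-t_ks_k)$. Step 6: set $\sigma_{k+1}:=\sigma_k+\tilde t_k$, $k\leftarrow k+1$, go to Step 1. *)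

From HB Require Import structures.
From mathcomp Require Import all_boot all_order all_algebra.
From mathcomp Require Import all_classical all_reals all_analysis.
Set Implicit Arguments. Unset Strict Implicit. Unset Printing Implicit Defensive.
Import Order.TTheory GRing.Theory Num.Theory.
Local Open Scope classical_set_scope.
Local Open Scope ring_scope.

Section SInexPD_defs.
Context (R : realType) (n : nat).
Local Notation vec := 'rV[R]_n.

Definition dotp (u v : vec) : R := \sum_(i < n) u ord0 i * v ord0 i.
Definition enorm (u : vec) : R := Num.sqrt (dotp u u).

Definition esubdiff (f : vec -> R) (e : R) (x : vec) : set vec :=
  [set s | forall y, f x + dotp s (y - x) - e <= f y].
Definition subdiff (f : vec -> R) (x : vec) : set vec := esubdiff f 0 x.

Definition rel_err_tol (g th la : R) (phi : vec -> vec -> vec -> R) : Prop :=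
  forall u v w, 0 <= phi u v w /\
    phi u v w <= g * enorm (v - u) ^+ 2 + th * enorm (w - v) ^+ 2
                 + la * enorm (w - u) ^+ 2.

Definition inexact_proj (C : set vec) (phi : vec -> vec -> vec -> R)
  (u v : vec) : set vec :=
  [set w | C w /\ forall z, C z -> dotp (v - w) (z - w) <= phi u v w].

(* An infinite run of Algorithm SInexPD.
   x k      : x_k on entry to Step 1 of iteration k
   xh k     : x_k as used in Step 5 (= x^rec_k if Step 4 reset it, else x k)
   frec k, xrec k : f^rec_k, x^rec_k
   ell k    : value of ell used in Step 5 of iteration k
              (value on entry to iteration k is ell (k-1), and 0 for k = 0)
   kl l     : k(l);  delta l : delta_l
   sig k    : sigma_k on entry to iteration k (before a possible reset)
   beta, eps, s, phi : choices of Step 5. *)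
Definition SInexPD_run (f : vec -> R) (C : set vec) (Rb delta0 mu blo bhi : R)
  (gamma theta lambda : nat -> R) (phi : nat -> vec -> vec -> vec -> R)
  (x xh : nat -> vec) (frec : nat -> R) (xrec : nat -> vec)
  (ell kl : nat -> nat) (delta sig beta eps : nat -> R) (s : nat -> vec)
  : Prop :=
  let ell_in k := if k is k'.+1 then ell k' else 0%N in
  let flev k := frec (kl (ell k)) - delta (ell k) in
  let tt k := beta k * (f (xh k) - flev k) / enorm (s k) in
  let t k := tt k / enorm (s k) in
  [/\ (* Step 0 *)
      [/\ C (x 0%N), 0 < delta0, 0 < Rb, delta 0%N = delta0
        & kl 0%N = 0%N /\ sig 0%N = 0],
      (* Step 1 *)
      [/\ frec 0%N = f (x 0%N) /\ xrec 0%N = x 0%N,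
        (forall k, f (x k.+1) < frec k ->
          frec k.+1 = f (x k.+1) /\ xrec k.+1 = x k.+1)
      & (forall k, ~ (f (x k.+1) < frec k) ->
          frec k.+1 = frec k /\ xrec k.+1 = xrec k)],
      (* Step 2: the algorithm never stops *)
      (forall k, ~ subdiff f (x k) 0),
      (* Steps 3, 4 and 6 *)
      (forall k, let l := ell_in k in
        [/\ f (x k) <= frec (kl l) - delta l / 2 ->
              [/\ ell k = l.+1, kl l.+1 = k, delta l.+1 = delta l,
                  xh k = x k & sig k.+1 = tt k],
            ~ (f (x k) <= frec (kl l) - delta l / 2) -> Rb < sig k ->
              [/\ ell k = l.+1, kl l.+1 = k, delta l.+1 = delta l / 2,
                  xh k = xrec k & sig k.+1 = tt k]
          & ~ (f (x k) <= frec (kl l) - delta l / 2) -> ~ (Rb < sig k) ->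
              [/\ ell k = l, xh k = x k & sig k.+1 = sig k + tt k]])
    & (* Step 5 *)
      (forall k,
        [/\ blo <= beta k <= bhi, eps k.+1 <= eps k,
            0 < eps k <= mu * beta k * (f (xh k) - flev k),
            s k != 0 /\ esubdiff f (eps k) (xh k) (s k)
          & rel_err_tol (gamma k) (theta k) (lambda k) (phi k) /\
            inexact_proj C (phi k) (xh k) (xh k - t k *: s k) (x k.+1)])].

End SInexPD_defs.

From HB Require Import structures.
From mathcomp Require Import all_boot all_order all_algebra.
From mathcomp Require Import all_classical all_reals all_analysis.
From mathcomp Require Import ring lra.
Import Order.TTheory GRing.Theory Num.Theory.
Local Open Scope classical_set_scope.
Local Open Scope ring_scope.

(* Since every x_k lies in C, it suffices to refute a "gap": a point y of C
   and a level m with f y < m <= f(x_k) for all k.  The bookkeeping of the run (groups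
   started at k(l), the record value, delta_l and the path length sigma_k)
   is then developed, and the gap is refuted by cases:
   - no new group ever starts: the path length stays below R while every
     stepsize is bounded below, which is absurd;
   - finitely many resets: delta stabilises and the reference value drops
     by delta/2 infinitely often, going below m;
   - infinitely many resets: delta -> 0, the iterates stay bounded by Fejer
     monotonicity, and the stepsizes of a late group sum to O(delta), so the
     path length can no longer exceed R and Step 4 stops firing. *)

Local Notation sqn u := (dotp u u).

Section Euclid.
Local Set Implicit Arguments.
Local Unset Strict Implicit.
Variables (R : realType) (n : nat).
Implicit Types (u v w : 'rV[R]_n).

Lemma dotpC u v : dotp u v = dotp v u.
Proof. by apply: eq_bigr => i _; rewrite mulrC. Qed.

Lemma dotpDl u v w : dotp (u + v) w = dotp u w + dotp v w.
Proof. by rewrite /dotp -big_split; apply: eq_bigr => i _; rewrite mxE mulrDl. Qed.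

Lemma dotpZl (a : R) u w : dotp (a *: u) w = a * dotp u w.
Proof. by rewrite /dotp mulr_sumr; apply: eq_bigr => i _; rewrite mxE mulrA. Qed.

Lemma dotpNl u w : dotp (- u) w = - dotp u w.
Proof. by rewrite -scaleN1r dotpZl mulN1r. Qed.

Lemma dotpBl u v w : dotp (u - v) w = dotp u w - dotp v w.
Proof. by rewrite dotpDl dotpNl. Qed.

Lemma dotpDr u v w : dotp w (u + v) = dotp w u + dotp w v.
Proof. by rewrite dotpC dotpDl !(dotpC w). Qed.

Lemma dotpBr u v w : dotp w (u - v) = dotp w u - dotp w v.
Proof. by rewrite dotpC dotpBl !(dotpC w). Qed.

Lemma dotpZr (a : R) u w : dotp w (a *: u) = a * dotp w u.
Proof. by rewrite dotpC dotpZl dotpC. Qed.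

Lemma dotpNr u w : dotp w (- u) = - dotp w u.
Proof. by rewrite dotpC dotpNl dotpC. Qed.

Lemma sqnD u v : sqn (u + v) = sqn u + sqn v + 2 * dotp u v.
Proof. rewrite dotpDl !dotpDr (dotpC v u); lra. Qed.

Lemma sqnB u v : sqn (u - v) = sqn u + sqn v - 2 * dotp u v.
Proof. rewrite dotpBl !dotpBr (dotpC v u); lra. Qed.

Lemma sqnN u : sqn (- u) = sqn u.
Proof. by rewrite dotpNl dotpC dotpNl opprK. Qed.

Lemma sqn_sym u v : sqn (u - v) = sqn (v - u).
Proof. by rewrite -sqnN opprB. Qed.

Lemma sqn_ge0 u : 0 <= sqn u.
Proof. by apply: sumr_ge0 => i _; rewrite -expr2 sqr_ge0. Qed.

Lemma sqr_coord_le u (i : 'I_n) : u ord0 i ^+ 2 <= sqn u.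
Proof.
rewrite /dotp (bigD1 i) //= -expr2 lerDl.
by apply: sumr_ge0 => j _; rewrite -expr2 sqr_ge0.
Qed.

Lemma sqn_eq0 u : sqn u = 0 -> u = 0.
Proof.
move=> u0; apply/rowP => i; rewrite mxE.
have := sqr_coord_le u i; rewrite u0 => ui.
by apply/eqP; rewrite -sqrf_eq0 eq_le ui sqr_ge0.
Qed.

Lemma enorm_sq u : enorm u ^+ 2 = sqn u.
Proof. by rewrite /enorm sqr_sqrtr // sqn_ge0. Qed.

Lemma enorm0 : enorm (0 : 'rV[R]_n) = 0.
Proof.
by rewrite /enorm /dotp big1 ?sqrtr0 // => i _; rewrite mxE mul0r.
Qed.

Lemma enorm_gt0 u : u != 0 -> 0 < enorm u.
Proof.
move=> u0; rewrite lt_neqAle sqrtr_ge0 andbT; apply/eqP => e0.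
by move/eqP: u0; apply; apply: sqn_eq0; rewrite -enorm_sq -e0 expr0n.
Qed.

Lemma coord_le_of_sqn u (i : 'I_n) (e : R) :
  0 <= e -> sqn u <= e ^+ 2 -> `|u ord0 i| <= e.
Proof.
move=> e0 ue; have := sqr_coord_le u i; rewrite -real_normK ?num_real // => ui.
have ue2 : `|u ord0 i| ^+ 2 <= e ^+ 2 by lra.
by rewrite -(ler_pXn2r (isT : (0 < 2)%N)) // nnegrE.
Qed.

Lemma coord_le_sqn_add1 u (i : 'I_n) (M : R) : sqn u <= M -> `|u ord0 i| <= M + 1.
Proof.
move=> uM; have := sqr_coord_le u i; rewrite -real_normK ?num_real // => ui.
have [le1|gt1] := leP `|u ord0 i| 1.
  have M0 : 0 <= M by apply: le_trans (sqn_ge0 u) uM.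
  lra.
have : `|u ord0 i| <= `|u ord0 i| ^+ 2 by rewrite expr2 ler_peMl // ltW.
lra.
Qed.

End Euclid.

Section InexactProjection.
Local Set Implicit Arguments.
Local Unset Strict Implicit.
Variables (R : realType) (n : nat).
Implicit Types (u v w z : 'rV[R]_n).

(* This is where nu enters the stepsizes. *)
Lemma inexact_proj_estimate u v w z (ph g th la gb lb : R) :
  dotp (v - w) (z - w) <= ph -> dotp (v - w) (u - w) <= ph ->
  ph <= g * sqn (v - u) + th * sqn (w - v) + la * sqn (w - u) ->
  0 <= g <= gb -> 0 <= th <= 1/2 -> 0 <= la <= lb -> lb < 1/2 ->
  sqn (w - u) <= (1 + 2 * gb) / (1 - 2 * lb) * sqn (v - u) /\
  sqn (w - z) <= sqn (v - z) + ((1 + 2 * gb) / (1 - 2 * lb) - 1) * sqn (v - u).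
Proof.
move=> pz pu phle /andP[g0 g1] /andP[t0 t1] /andP[l0 l1] lb1.
set A := sqn (w - u); set B := sqn (v - u); set Cc := sqn (w - v).
have eB : B = Cc + A - 2 * dotp (v - w) (u - w).
  rewrite /B; have -> : v - u = (v - w) - (u - w) by rewrite opprB addrA subrK.
  rewrite sqnB /Cc /A (sqn_sym w v) (sqn_sym w u); lra.
have eZ : sqn (v - z) = Cc + sqn (w - z) - 2 * dotp (v - w) (z - w).
  have -> : v - z = (v - w) + (w - z) by rewrite addrA subrK.
  have -> : z - w = - (w - z) by rewrite opprB.
  by rewrite sqnD dotpNr /Cc (sqn_sym w v); lra.
have A0 : 0 <= A by apply: sqn_ge0.
have B0 : 0 <= B by apply: sqn_ge0.
have C0 : 0 <= Cc by apply: sqn_ge0.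
have thC : th * Cc <= Cc / 2 by nra.
have laA : la * A <= lb * A by nra.
have gB : g * B <= gb * B by nra.
have lbp : 0 < 1 - 2 * lb by lra.
set nu := (1 + 2 * gb) / (1 - 2 * lb).
have enu : nu * (1 - 2 * lb) = 1 + 2 * gb by rewrite /nu mulfVK // gt_eqF.
have AnuB : A <= nu * B.
  have k1 : A * (1 - 2 * lb) <= (1 + 2 * gb) * B by move: pu phle eB thC laA gB; rewrite -/A -/B -/Cc; lra.
  by rewrite -(ler_pM2r lbp); nra.
split => //.
have : lb * A <= lb * (nu * B) by nra.
have e3 : (nu - 1) * B = 2 * gb * B + 2 * (lb * (nu * B)).
  transitivity ((nu * (1 - 2 * lb) - 1 + 2 * lb * nu) * B); first ring.
  by rewrite enu; ring.
rewrite e3; move: pz phle eZ thC laA gB; rewrite -/A -/B -/Cc; lra.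
Qed.

End InexactProjection.

Section Convexity.
Local Set Implicit Arguments.
Local Unset Strict Implicit.
Variables (R : realType) (n : nat).
Local Notation vec := 'rV[R]_n.
Implicit Types (f : vec -> R) (C : set vec).

Lemma convex_fun_le f : convex_function [set: vec] f ->
  forall (l : R) (a b : vec), 0 <= l -> l <= 1 ->
  f (l *: a + (1 - l) *: b) <= l * f a + (1 - l) * f b.
Proof.
move=> cf l a b l0 l1.
by have := cf (Itv01 l0 l1) a b; rewrite !inE => /(_ I I).
Qed.

Lemma convex_set_comb C : convex_set C ->
  forall (l : R) (a b : vec), 0 <= l -> l <= 1 -> C a -> C b ->
  C (l *: a + (1 - l) *: b).
Proof.
move=> cC l a b l0 l1 Ca Cb.
by have := cC a b (Itv01 l0 l1); rewrite !inE => /(_ Ca Cb).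
Qed.

Lemma convex_fun_le_max f : convex_function [set: vec] f ->
  forall (l : R) (a b : vec), 0 <= l -> l <= 1 ->
  f (l *: a + (1 - l) *: b) <= Num.max (f a) (f b).
Proof.
move=> cf l a b l0 l1; apply: le_trans (convex_fun_le cf a b l0 l1) _.
have : l * f a <= l * Num.max (f a) (f b) by rewrite ler_wpM2l // le_max lexx.
have : (1 - l) * f b <= (1 - l) * Num.max (f a) (f b).
  by rewrite ler_wpM2l ?subr_ge0 // le_max lexx orbT.
lra.
Qed.

Definition box (c : vec) (r : R) (w : vec) := forall i, `|w ord0 i - c ord0 i| <= r.

Definition slab (m : nat) (c : vec) (r : R) (w : vec) :=
  (forall i : 'I_n, (i < m)%N -> `|w ord0 i - c ord0 i| <= r) /\
  (forall i : 'I_n, (m <= i)%N -> w ord0 i = c ord0 i).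

Lemma slab_succ_split (m : nat) (mn : (m < n)%N) (c w : vec) (r : R) :
  0 < r -> slab m.+1 c r w ->
  let e : vec := \row_j ((j == Ordinal mn)%:R) in
  exists l (a b : vec), [/\ 0 <= l <= 1, w = l *: a + (1 - l) *: b,
    slab m (c + r *: e) r a & slab m (c - r *: e) r b].
Proof.
move=> r0 [inw onw] e; set im := Ordinal mn.
set d := w ord0 im - c ord0 im.
have dr : `|d| <= r by apply: inw; rewrite ltnSn.
set w' := w - d *: e.
have coord (t : R) (i : 'I_n) : (w' + t *: e) ord0 i - (c + t *: e) ord0 i
    = w ord0 i - c ord0 i - d * (i == im)%:R.
  by rewrite /w' /e !mxE; ring.
have slabt (t : R) : slab m (c + t *: e) r (w' + t *: e).
  split=> i hi; rewrite ?coord.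
    have -> : (i == im) = false.
      by apply/negbTE; apply/eqP => ei; move: hi; rewrite ei ltnn.
    by rewrite mulr0 subr0 inw // ltnW.
  apply/eqP; rewrite -subr_eq0 coord; have [->|nei] := eqVneq i im.
    by rewrite mulr1 subrr.
  rewrite mulr0 subr0 onw ?subrr //.
  rewrite ltn_neqAle hi andbT eq_sym; apply: contra_neq nei => ei; exact: val_inj.
exists ((1 + d / r) / 2), (w' + r *: e), (w' - r *: e); split.
- have := ler_norm d; have := ler_norm (- d); rewrite normrN => dN dP.
  have : d / r <= 1 by rewrite ler_pdivrMr // mul1r; lra.
  have : - d / r <= 1 by rewrite ler_pdivrMr // mul1r; lra.
  by rewrite mulNr => h1 h2; apply/andP; split; lra.
- by apply/rowP => i; rewrite /w' /e !mxE; field; rewrite gt_eqF.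
- exact: slabt.
- by rewrite -!scaleNr; apply: slabt.
Qed.

Lemma convex_bounded_on_box f : convex_function [set: vec] f ->
  forall (c : vec) (r : R), 0 < r -> exists U, forall w, box c r w -> f w <= U.
Proof.
move=> cf c0 r r0.
suff slab_bound m (c : vec) : exists U, forall w, slab m c r w -> f w <= U.
  have [U HU] := slab_bound n c0; exists U => w hw; apply: HU; split=> [i _|i].
    exact: hw.
  by rewrite leqNgt ltn_ord.
elim: m c => [|m IH] c.
  exists (f c) => w [_ onw]; suff -> : w = c by [].
  by apply/rowP => i; apply: onw.
have [mn|nm] := ltnP m n; last first.
  have [U HU] := IH c; exists U => w [inw onw]; apply: HU; split=> i hi.
    by apply: inw; apply: ltnW.
  by move: hi; rewrite leqNgt (leq_trans (ltn_ord i) nm).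
set e : vec := \row_j ((j == Ordinal mn)%:R).
have [Up HUp] := IH (c + r *: e); have [Um HUm] := IH (c - r *: e).
exists (Num.max Up Um) => w /(slab_succ_split mn r0) [l [a [b]]].
case=> /andP[l0 l1] -> sa sb.
apply: le_trans (convex_fun_le_max cf a b l0 l1) _.
by rewrite ge_max !le_max (HUp a sa) (HUm b sb) orbT.
Qed.

Lemma esubdiff_bounded_on_box f (c : vec) (r L E : R) :
  convex_function [set: vec] f -> 0 < r ->
  exists S, 0 < S /\ forall (u : vec) (e : R) (s : vec),
    box c r u -> e <= E -> L <= f u -> esubdiff f e u s -> enorm s <= S.
Proof.
move=> cf r0.
have [U HU] := convex_bounded_on_box cf c (ltr_wpDr ler01 r0 : 0 < r + 1).
exists (Num.max 1 (U - L + E)); split; first by rewrite lt_max ltr01.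
move=> u e s ub eE Lu sg.
have [->|s0] := eqVneq s 0; first by rewrite enorm0 le_max ler01.
set ns := enorm s; have ns0 : 0 < ns by apply: enorm_gt0.
set y := u + ns^-1 *: s.
have yb : box c (r + 1) y.
  move=> i; rewrite /y !mxE.
  have si : `|s ord0 i| <= ns.
    by apply: coord_le_of_sqn; [exact: ltW | rewrite /ns enorm_sq].
  have : `|ns^-1 * s ord0 i| <= 1.
    by rewrite normrM gtr0_norm ?invr_gt0 // ler_pdivrMl // mulr1.
  have := ub i; have := ler_normD (u ord0 i - c ord0 i) (ns^-1 * s ord0 i).
  have -> : u ord0 i - c ord0 i + ns^-1 * s ord0 i = u ord0 i + ns^-1 * s ord0 i - c ord0 i.
    by ring.
  lra.
have gain : dotp s (y - u) = ns.
  rewrite /y addrAC subrr add0r dotpZr -enorm_sq -/ns; by field; rewrite gt_eqF.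
have := sg y; rewrite gain; have := HU _ yb.
have : U - L + E <= Num.max 1 (U - L + E) by rewrite le_max lexx orbT.
lra.
Qed.

End Convexity.

Lemma exists_nat_gt {R : realType} (a : R) : exists N : nat, a < N%:R.
Proof.
case: (leP 0 a) => a0; last by exists 0%N.
by exists (Num.Def.archi_bound a); apply: archi_boundP.
Qed.

Section Run.
Local Set Implicit Arguments.
Local Unset Strict Implicit.
Variables (R : realType) (n : nat)
  (f : 'rV[R]_n -> R) (C : set 'rV[R]_n)
  (gbar thbar lbar mu blo bhi Rb delta0 : R)
  (gamma theta lambda : nat -> R)
  (phi : nat -> 'rV[R]_n -> 'rV[R]_n -> 'rV[R]_n -> R)
  (x xh : nat -> 'rV[R]_n) (frec : nat -> R) (xrec : nat -> 'rV[R]_n)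
  (ell kl : nat -> nat) (delta sig beta eps : nat -> R)
  (s : nat -> 'rV[R]_n).
Local Notation vec := 'rV[R]_n.

(* Iteration k belongs to the group started at
   k(l) = kstart k; the suffix _in denotes the values on entry to iteration
   k (before Steps 3-4), the plain names those used in Step 5. *)
Definition ell_in k := if k is k'.+1 then ell k' else 0%N.
Definition kstart k := kl (ell k).
Definition delta_at k := delta (ell k).
Definition fref k := frec (kl (ell k)).
Definition kstart_in k := kl (ell_in k).
Definition delta_in k := delta (ell_in k).
Definition fref_in k := frec (kl (ell_in k)).
Definition flev k := fref k - delta_at k.
(* The stepsizes: ttil k is the distance |t_k s_k| of the trial step,
   tstep k = t_k its coefficient. *)
Definition ttil k := beta k * (f (xh k) - flev k) / enorm (s k).
Definition tstep k := ttil k / enorm (s k).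
(* The tests of Step 3 (sufficient descent) and Step 4 (path too long). *)
Definition descent_test k := f (x k) <= fref_in k - delta_in k / 2.
Definition reset_test k := ~ descent_test k /\ Rb < sig k.
Definition new_group k := descent_test k \/ reset_test k.
Definition nu := (1 + 2 * gbar) / (1 - 2 * lbar).

Hypothesis f_convex : convex_function [set: vec] f.
Hypothesis C_convex : convex_set C.
Hypothesis gbar_ge0 : 0 <= gbar.
Hypothesis thbar_range : 0 <= thbar < 1 / 2.
Hypothesis lbar_range : 0 <= lbar < 1 / 2.
Hypothesis gamma_range : forall k, 0 <= gamma k < gbar.
Hypothesis theta_range : forall k, 0 <= theta k < thbar.
Hypothesis lambda_range : forall k, 0 <= lambda k < lbar.
Hypothesis mu_ge0 : 0 <= mu.
Hypothesis blo_gt0 : 0 < blo.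
Hypothesis bhi_lt : bhi < 2 / (2 * mu + nu).
Hypothesis x0_in_C : C (x 0%N).
Hypothesis delta0_gt0 : 0 < delta0.
Hypothesis Rb_gt0 : 0 < Rb.
Hypothesis delta_init : delta 0%N = delta0.
Hypothesis kl_init : kl 0%N = 0%N.
Hypothesis sig_init : sig 0%N = 0.
Hypothesis frec_init : frec 0%N = f (x 0%N) /\ xrec 0%N = x 0%N.
Hypothesis frec_new : forall k, f (x k.+1) < frec k ->
  frec k.+1 = f (x k.+1) /\ xrec k.+1 = x k.+1.
Hypothesis frec_keep : forall k, ~ (f (x k.+1) < frec k) ->
  frec k.+1 = frec k /\ xrec k.+1 = xrec k.
Hypothesis descent_step : forall k, descent_test k ->
  [/\ ell k = (ell_in k).+1, kl (ell_in k).+1 = k,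
      delta (ell_in k).+1 = delta (ell_in k), xh k = x k & sig k.+1 = ttil k].
Hypothesis reset_step : forall k, ~ descent_test k -> Rb < sig k ->
  [/\ ell k = (ell_in k).+1, kl (ell_in k).+1 = k,
      delta (ell_in k).+1 = delta (ell_in k) / 2, xh k = xrec k & sig k.+1 = ttil k].
Hypothesis inner_step : forall k, ~ descent_test k -> ~ (Rb < sig k) ->
  [/\ ell k = ell_in k, xh k = x k & sig k.+1 = sig k + ttil k].
Hypothesis step5 : forall k,
  [/\ blo <= beta k <= bhi, eps k.+1 <= eps k,
      0 < eps k <= mu * beta k * (f (xh k) - flev k),
      s k != 0 /\ esubdiff f (eps k) (xh k) (s k)
    & rel_err_tol (gamma k) (theta k) (lambda k) (phi k) /\
      inexact_proj C (phi k) (xh k) (xh k - tstep k *: s k) (x k.+1)].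

Lemma fref_in_succ k : fref_in k.+1 = fref k. Proof. by []. Qed.
Lemma delta_in_succ k : delta_in k.+1 = delta_at k. Proof. by []. Qed.
Lemma kstart_in_succ k : kstart_in k.+1 = kstart k. Proof. by []. Qed.

Lemma step_cases k :
  [\/ descent_test k, reset_test k | ~ descent_test k /\ ~ (Rb < sig k)].
Proof.
case: (pselect (descent_test k)) => d; first by constructor 1.
case: (pselect (Rb < sig k)) => r; first by constructor 2.
by constructor 3.
Qed.

Lemma descent_spec k : descent_test k ->
  [/\ delta_at k = delta_in k, xh k = x k & sig k.+1 = ttil k].
Proof.
by move=> h; case: (descent_step h) => el _ ed ex es; rewrite /delta_at el ed.
Qed.

Lemma reset_spec k : reset_test k ->
  [/\ delta_at k = delta_in k / 2, xh k = xrec k & sig k.+1 = ttil k].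
Proof.
by case=> h r; case: (reset_step h r) => el _ ed ex es; rewrite /delta_at el ed.
Qed.

Lemma new_group_start k : new_group k -> kstart k = k /\ fref k = frec k.
Proof.
rewrite /kstart /fref; case=> [h|[h r]].
  by case: (descent_step h) => -> ->.
by case: (reset_step h r) => -> ->.
Qed.

Lemma same_group k : ~ new_group k ->
  [/\ kstart k = kstart_in k, delta_at k = delta_in k, fref k = fref_in k,
      xh k = x k & sig k.+1 = sig k + ttil k].
Proof.
move=> h; have nd : ~ descent_test k by move=> ?; apply: h; left.
have nr : ~ (Rb < sig k) by move=> ?; apply: h; right.
case: (inner_step nd nr) => el ex es.
by rewrite /kstart /delta_at /fref /kstart_in /delta_in /fref_in el.
Qed.

Lemma no_new_group k : ~ descent_test k -> ~ (Rb < sig k) -> ~ new_group k.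
Proof. by move=> nd nr [|[]]. Qed.

Lemma delta_at_step k : delta_at k = delta_in k \/ delta_at k = delta_in k / 2.
Proof.
case: (step_cases k) => [h|h|[nd nr]].
- by case: (descent_spec h); left.
- by case: (reset_spec h); right.
- by case: (same_group (no_new_group nd nr)); left.
Qed.

Lemma delta_at_gt0 k : 0 < delta_at k.
Proof.
elim: k => [|k IH].
  by case: (delta_at_step 0) => ->; rewrite /delta_in /= delta_init ?divr_gt0.
by case: (delta_at_step k.+1) => ->; rewrite delta_in_succ ?divr_gt0.
Qed.

Lemma delta_at_anti i j : (i <= j)%N -> delta_at j <= delta_at i.
Proof.
move=> /subnK <-; elim: (j - i)%N => [|d IH]; first by rewrite add0n.
rewrite addSn; apply: le_trans IH; have := delta_at_gt0 (d + i).
by case: (delta_at_step (d + i).+1) => ->; rewrite delta_in_succ; lra.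
Qed.

Lemma frec_succ k : frec k.+1 <= frec k /\ frec k.+1 <= f (x k.+1).
Proof.
case: (pselect (f (x k.+1) < frec k)) => h.
  by case: (frec_new h) => -> _; split; [apply: ltW|].
by case: (frec_keep h) => -> _; split => //; rewrite leNgt; apply/negP.
Qed.

Lemma frec_le_f k : frec k <= f (x k).
Proof. by case: k => [|k]; [rewrite frec_init.1 | case: (frec_succ k)]. Qed.

Lemma frec_anti i j : (i <= j)%N -> frec j <= frec i.
Proof.
move=> /subnK <-; elim: (j - i)%N => [|d IH]; first by rewrite add0n.
by rewrite addSn; apply: le_trans IH; case: (frec_succ (d + i)).
Qed.

Lemma xrec_spec k : f (xrec k) = frec k /\ exists2 j, (j <= k)%N & xrec k = x j.
Proof.
elim: k => [|k [IH1 [j jk IH2]]].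
  by rewrite frec_init.2 frec_init.1; split => //; exists 0%N.
case: (pselect (f (x k.+1) < frec k)) => h.
  by case: (frec_new h) => -> ->; split => //; exists k.+1.
by case: (frec_keep h) => -> ->; split => //; exists j => //; apply: leqW.
Qed.

Lemma xh_spec k : xh k = x k \/ xh k = xrec k.
Proof.
case: (step_cases k) => [h|h|[nd nr]].
- by case: (descent_spec h); left.
- by case: (reset_spec h); right.
- by case: (same_group (no_new_group nd nr)); left.
Qed.

Lemma x_in_C k : C (x k).
Proof. by case: k => [|k] //; case: (step5 k) => _ _ _ _ [_ []]. Qed.

Lemma xh_in_C k : C (xh k).
Proof.
case: (xh_spec k) => ->; first exact: x_in_C.
by case: (xrec_spec k) => _ [j _ ->]; apply: x_in_C.
Qed.

Lemma kstart_step k : kstart k = k \/ kstart k = kstart_in k.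
Proof.
case: (pselect (new_group k)) => h; first by case: (new_group_start h); left.
by case: (same_group h); right.
Qed.

Lemma kstart_le k : (kstart k <= k)%N.
Proof.
elim: k => [|k IH].
  by case: (kstart_step 0) => ->; rewrite /kstart_in /= ?kl_init.
by case: (kstart_step k.+1) => -> //; rewrite kstart_in_succ leqW.
Qed.

Lemma kstart_mono i j : (i <= j)%N -> (kstart i <= kstart j)%N.
Proof.
move=> /subnK <-; elim: (j - i)%N => [|d IH]; first by rewrite add0n.
apply: leq_trans IH _; rewrite addSn.
by case: (kstart_step (d + i).+1) => ->; [apply/leqW/kstart_le | rewrite kstart_in_succ].
Qed.

Lemma kstart_idem k : kstart (kstart k) = kstart k.
Proof.
elim: k => [|k IH].
  have /eqP e : kstart 0 == 0%N by rewrite -leqn0 kstart_le.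
  by rewrite !e.
by case: (kstart_step k.+1) => e; rewrite e // kstart_in_succ.
Qed.

Lemma group_members k j : (kstart k <= j <= k)%N ->
  kstart j = kstart k /\ ((kstart k < j)%N -> ~ new_group j).
Proof.
case/andP=> kj jk.
have e : kstart j = kstart k.
  apply/eqP; rewrite eqn_leq kstart_mono //=.
  by rewrite -{1}kstart_idem kstart_mono.
split=> // lt ng; case: (new_group_start ng) => ej _.
by move: lt; rewrite -e ej ltnn.
Qed.

Lemma frec_le_fref k : frec k <= fref k.
Proof. exact/frec_anti/kstart_le. Qed.

Lemma fref_succ k : fref k.+1 <= fref k.
Proof.
case: (pselect (new_group k.+1)) => h.
  case: (new_group_start h) => _ ->; apply: le_trans (frec_le_fref k).
  by case: (frec_succ k).
by case: (same_group h) => _ _ ->.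
Qed.

Lemma fref_anti i j : (i <= j)%N -> fref j <= fref i.
Proof.
move=> /subnK <-; elim: (j - i)%N => [|d IH]; first by rewrite add0n.
by rewrite addSn; apply: le_trans IH; apply: fref_succ.
Qed.

Lemma frec_gap k : fref k - delta_at k / 2 < frec k.
Proof.
elim: k => [|k IH].
  have := delta_at_gt0 0; case: (pselect (new_group 0)) => h.
    by case: (new_group_start h) => _ ->; lra.
  case: (same_group h) => _ -> -> _ _.
  by rewrite /fref_in /delta_in /= kl_init delta_init; lra.
have := delta_at_gt0 k.+1; case: (pselect (new_group k.+1)) => h.
  by case: (new_group_start h) => _ ->; lra.
case: (same_group h) => _ -> -> _ _ _; rewrite fref_in_succ delta_in_succ.
have nd : ~ descent_test k.+1 by move=> ?; apply: h; left.
have gap : fref k - delta_at k / 2 < f (x k.+1).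
  by rewrite ltNge; apply/negP; rewrite -fref_in_succ -delta_in_succ.
case: (pselect (f (x k.+1) < frec k)) => hh.
  by case: (frec_new hh) => ->.
by case: (frec_keep hh) => ->.
Qed.

Lemma descent_new_record k : descent_test k -> frec k = f (x k).
Proof.
case: k => [|k] h.
  have := delta_at_gt0 0; move: h.
  by rewrite /descent_test /fref_in /delta_in /= kl_init delta_init frec_init.1; lra.
have hh : f (x k.+1) < frec k.
  by have := frec_gap k; move: h; rewrite /descent_test fref_in_succ delta_in_succ; lra.
by case: (frec_new hh).
Qed.

Lemma fref_drop k : descent_test k.+1 -> fref k.+1 <= fref k - delta_at k / 2.
Proof.
move=> h; case: (new_group_start (or_introl h)) => _ ->.
by rewrite descent_new_record //; move: h; rewrite /descent_test fref_in_succ delta_in_succ.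
Qed.

Lemma level_gap k : delta_at k / 2 <= f (xh k) - flev k.
Proof.
rewrite /flev; have := delta_at_gt0 k.
case: (step_cases k) => [h|h|[nd nr]].
- case: (descent_spec h) => _ -> _; case: (new_group_start (or_introl h)) => _ ->.
  by have := frec_le_f k; lra.
- case: (reset_spec h) => _ -> _; case: (new_group_start (or_intror h)) => _ ->.
  by case: (xrec_spec k) => ->; lra.
- case: (same_group (no_new_group nd nr)) => _ -> -> -> _.
  have : fref_in k - delta_in k / 2 < f (x k) by rewrite ltNge; apply/negP.
  lra.
Qed.

Lemma level_gap_gt0 k : 0 < f (xh k) - flev k.
Proof. by have := level_gap k; have := delta_at_gt0 k; lra. Qed.

Lemma group_start_le k : kstart k = k -> f (xh k) <= frec k.
Proof.
move=> sk; case: (step_cases k) => [h|h|[nd nr]].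
- by case: (descent_spec h) => _ -> _; rewrite descent_new_record.
- by case: (reset_spec h) => _ -> _; case: (xrec_spec k) => ->.
- case: (same_group (no_new_group nd nr)) => e _ _ -> _.
  case: k sk e {nd nr} => [|k] sk e; first by rewrite frec_init.1.
  by move: (kstart_le k); rewrite -kstart_in_succ -e sk ltnn.
Qed.

Lemma enorm_s_gt0 k : 0 < enorm (s k).
Proof. by case: (step5 k) => _ _ _ [s0 _] _; apply: enorm_gt0. Qed.

Lemma beta_gt0 k : 0 < beta k.
Proof. by case: (step5 k) => /andP[b _] _ _ _ _; apply: lt_le_trans b. Qed.

Lemma ttil_gt0 k : 0 < ttil k.
Proof. by rewrite /ttil divr_gt0 ?mulr_gt0 ?beta_gt0 ?level_gap_gt0 ?enorm_s_gt0. Qed.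

Lemma tstep_gt0 k : 0 < tstep k.
Proof. by rewrite /tstep divr_gt0 ?ttil_gt0 ?enorm_s_gt0. Qed.

Lemma ttil_tstep k : ttil k = tstep k * enorm (s k).
Proof. by rewrite /tstep divfK // gt_eqF // enorm_s_gt0. Qed.

(* sigma_k is the length of the path travelled since the group started. *)
Lemma sig_sum k : sig k = \sum_(kstart_in k <= j < k) ttil j.
Proof.
elim: k => [|k IH]; first by rewrite /kstart_in /= kl_init big_geq.
rewrite kstart_in_succ; case: (step_cases k) => [h|h|[nd nr]].
- case: (descent_spec h) => _ _ ->; case: (new_group_start (or_introl h)) => -> _.
  by rewrite big_nat1.
- case: (reset_spec h) => _ _ ->; case: (new_group_start (or_intror h)) => -> _.
  by rewrite big_nat1.
- case: (same_group (no_new_group nd nr)) => -> _ _ _ ->.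
  rewrite IH big_nat_recr //=; case: k {IH nd nr} => [|k] /=.
    by rewrite /kstart_in /= kl_init.
  by rewrite kstart_in_succ ltnW // ltnS kstart_le.
Qed.

Lemma sig_ge0 k : 0 <= sig k.
Proof. by rewrite sig_sum; apply: sumr_ge0 => i _; apply/ltW/ttil_gt0. Qed.

Lemma eps_le_init k : eps k <= eps 0%N.
Proof. by elim: k => [//|k IH]; apply: le_trans IH; case: (step5 k). Qed.

Lemma nu_ge1 : 1 <= nu.
Proof.
have := gbar_ge0; case/andP: lbar_range => l0 l1.
by rewrite /nu ler_pdivlMr; lra.
Qed.

Lemma beta_nu_le2 k : beta k * (2 * mu + nu) <= 2.
Proof.
have p : 0 < 2 * mu + nu by have := nu_ge1; have := mu_ge0; lra.
have : bhi * (2 * mu + nu) < 2 by rewrite -ltr_pdivlMr.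
case: (step5 k) => /andP[_ b2] _ _ _ _.
have : beta k * (2 * mu + nu) <= bhi * (2 * mu + nu) by rewrite ler_pM2r.
lra.
Qed.

Lemma delta_kept k : ~ reset_test k -> delta_at k = delta_in k.
Proof.
move=> nr; case: (step_cases k) => [h|h|[nd nr']].
- by case: (descent_spec h).
- by case: (nr h).
- by case: (same_group (no_new_group nd nr')).
Qed.

Lemma group_delta k j : (kstart k <= j <= k)%N -> delta_at j = delta_at (kstart k).
Proof.
set k0 := kstart k; case/andP=> k0j jk.
suff dP d : (k0 + d <= k)%N -> delta_at (k0 + d) = delta_at k0.
  by rewrite -(subnKC k0j) dP // subnKC.
elim: d => [|d IH] hd; first by rewrite addn0.
move: hd; rewrite addnS => hd.
have mem : (k0 <= (k0 + d).+1 <= k)%N by rewrite hd andbT leqW // leq_addr.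
have lt : (k0 < (k0 + d).+1)%N by rewrite ltnS leq_addr.
case: (same_group ((group_members mem).2 lt)) => _ -> _ _ _.
by rewrite delta_in_succ IH // ltnW.
Qed.

Lemma group_level k j : (kstart k <= j <= k)%N ->
  flev j = frec (kstart k) - delta_at (kstart k).
Proof.
move=> mem; rewrite /flev (group_delta mem) /fref.
by rewrite -/(kstart j) (group_members mem).1.
Qed.

Lemma iteration_estimate k z : C z ->
  let v := xh k - tstep k *: s k in
  sqn (x k.+1 - xh k) <= nu * sqn (v - xh k) /\
  sqn (x k.+1 - z) <= sqn (v - z) + (nu - 1) * sqn (v - xh k).
Proof.
move=> Cz v; case: (step5 k) => _ _ _ _ [tol [_ proj]].
have [_ phle] := tol (xh k) v (x k.+1); rewrite !enorm_sq in phle.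
have /andP[g0 g1] := gamma_range k; have /andP[t0 t1] := theta_range k.
have /andP[l0 l1] := lambda_range k.
case/andP: thbar_range => _ th1; case/andP: lbar_range => _ lb1.
have gk : 0 <= gamma k <= gbar by rewrite g0 ltW.
have tk : 0 <= theta k <= 1 / 2 by rewrite t0 /=; lra.
have lk : 0 <= lambda k <= lbar by rewrite l0 ltW.
exact: (inexact_proj_estimate (proj z Cz) (proj _ (xh_in_C k)) phle gk tk lk lb1).
Qed.

Lemma trial_sqn k : sqn (tstep k *: s k) = tstep k * (beta k * (f (xh k) - flev k)).
Proof.
rewrite dotpZl dotpZr -enorm_sq /tstep /ttil.
by field; rewrite gt_eqF // enorm_s_gt0.
Qed.

Lemma ttil_sqr k : ttil k ^+ 2 = tstep k * (beta k * (f (xh k) - flev k)).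
Proof. by rewrite /tstep /ttil; field; rewrite gt_eqF // enorm_s_gt0. Qed.

Lemma trial_minus k : xh k - tstep k *: s k - xh k = - (tstep k *: s k).
Proof. by rewrite addrAC subrr add0r. Qed.

Lemma step_length k : sqn (x k.+1 - xh k) <= nu * ttil k ^+ 2.
Proof.
have [est _] := iteration_estimate k x0_in_C.
by rewrite trial_minus sqnN trial_sqn -ttil_sqr in est.
Qed.

Lemma step_coord_le k (i : 'I_n) : xh k = x k ->
  `|x k.+1 ord0 i - x k ord0 i| <= nu * ttil k.
Proof.
move=> ex; have sl := step_length k; rewrite ex in sl.
have n1 := nu_ge1; have t0 := ttil_gt0 k.
have nn : nu <= nu ^+ 2 by rewrite expr2 ler_peMl // (le_trans ler01).
have pos : 0 <= (nu ^+ 2 - nu) * ttil k ^+ 2 by rewrite mulr_ge0 ?subr_ge0 ?sqr_ge0.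
have : sqn (x k.+1 - x k) <= (nu * ttil k) ^+ 2 by rewrite exprMn; lra.
move/(coord_le_of_sqn i); rewrite !mxE; apply.
by apply: mulr_ge0; [lra | exact: ltW].
Qed.

(* ... and every point z of C gets closer, by 2 t_k (flev_k - f z): the key
   descent inequality, which uses beta_k (2 mu + nu) <= 2. *)
Lemma descent k z : C z ->
  sqn (x k.+1 - z) <= sqn (xh k - z) - 2 * tstep k * (flev k - f z).
Proof.
move=> Cz; have [_ est] := iteration_estimate k Cz.
case: (step5 k) => _ _ /andP[_ epsD] [_ sg] _.
set u := xh k; set T := tstep k; set D := f u - flev k.
have T0 : 0 < T := tstep_gt0 k.
have D0 : 0 < D := level_gap_gt0 k.
have P : sqn (T *: s k) = T * (beta k * D) := trial_sqn k.
have vz : sqn (u - T *: s k - z) = sqn (u - z) + T * (beta k * D) - 2 * (T * dotp (u - z) (s k)).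
  have -> : u - T *: s k - z = (u - z) - T *: s k by rewrite addrAC.
  by rewrite [LHS]sqnB P dotpZr.
rewrite /u trial_minus sqnN -/u -/T P vz in est.
have sgz : - dotp (u - z) (s k) <= f z - f u + eps k.
  have e : dotp (s k) (z - u) = - dotp (u - z) (s k) by rewrite dotpC -dotpNl opprB.
  by have := sg z; rewrite e; lra.
have i1 : T * (- dotp (u - z) (s k)) <= T * (f z - f u + eps k) by rewrite ler_pM2l.
have i2 : T * eps k <= T * (mu * beta k * D) by rewrite ler_pM2l.
have i3 : T * (D * (beta k * (2 * mu + nu) - 2)) <= 0.
  by rewrite pmulr_rle0 // pmulr_rle0 // subr_le0 beta_nu_le2.
have ef : f u = flev k + D by rewrite /D; ring.
rewrite ef in i1; nra.
Qed.

Lemma ttil_ge k (S : R) : 0 < S -> enorm (s k) <= S ->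
  blo * (delta_at k / 2) / S <= ttil k.
Proof.
move=> S0 sS; rewrite /ttil.
have dg := level_gap k; have d0 := delta_at_gt0 k.
case: (step5 k) => /andP[b1 _] _ _ _ _.
apply: (@le_trans _ _ (beta k * (f (xh k) - flev k) / S)).
  by rewrite ler_pM2r ?invr_gt0 //; apply: ler_pM => //; [exact: ltW | lra].
by rewrite ler_pM2l ?mulr_gt0 ?beta_gt0 ?level_gap_gt0 // lef_pV2 ?posrE ?enorm_s_gt0.
Qed.

Lemma delta_vanishes : (forall K, exists k, (K <= k)%N /\ reset_test k) ->
  forall e, 0 < e -> exists K, forall k, (K <= k)%N -> delta_at k <= e.
Proof.
move=> resets.
have halving N : exists K, delta_at K <= delta0 / 2 ^+ N.
  elim: N => [|N [K hK]].
    exists 0%N; rewrite expr0 divr1 -delta_init.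
    by case: (delta_at_step 0) => e; have := delta_at_gt0 0; rewrite e /delta_in /=; lra.
  have [[|k] [Kk rk]] := resets K.+1; first by [].
  exists k.+1; case: (reset_spec rk) => -> _ _; rewrite delta_in_succ exprS.
  have := @delta_at_anti K k Kk.
  have -> : delta0 / (2 * 2 ^+ N) = delta0 / 2 ^+ N / 2.
    by field; rewrite expf_neq0 // pnatr_eq0.
  lra.
move=> e e0; have [N hN] := exists_nat_gt (delta0 / e).
have [K hK] := halving N; exists K => k Kk.
apply: le_trans (delta_at_anti Kk) _; apply: le_trans hK _.
have h2 : (N%:R : R) < 2 ^+ N by rewrite -natrX ltr_nat ltn_expl.
have p2 : 0 < (2 : R) ^+ N by rewrite exprn_gt0.
rewrite ler_pdivrMr //; move: hN; rewrite ltr_pdivrMr // => hN.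
have : e * N%:R <= e * 2 ^+ N by rewrite ler_pM2l // ltW.
lra.
Qed.

(* Summing the descent inequality over a group whose level stays dl above
   f z: the group's stepsizes are paid for by the distance to z. *)
Lemma group_telescope k z (dl : R) : C z ->
  (forall j, (kstart k <= j <= k)%N -> dl <= flev j - f z) ->
  sqn (x k.+1 - z) + 2 * dl * \sum_(kstart k <= i < k.+1) tstep i
    <= sqn (xh (kstart k) - z).
Proof.
move=> Cz gap; set k0 := kstart k; have k0k : (k0 <= k)%N := kstart_le k.
suff tele d : (k0 + d <= k)%N -> sqn (x (k0 + d).+1 - z)
    + 2 * dl * \sum_(k0 <= i < (k0 + d).+1) tstep i <= sqn (xh k0 - z).
  by have := tele (k - k0)%N; rewrite subnKC //; apply.
elim: d => [|d IH] dk.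
  rewrite addn0 big_nat1; have := descent k0 Cz; have := tstep_gt0 k0.
  have g0 : dl <= flev k0 - f z by apply: gap; rewrite leqnn k0k.
  have : tstep k0 * dl <= tstep k0 * (flev k0 - f z) by rewrite ler_pM2l ?tstep_gt0.
  lra.
move: dk; rewrite addnS => dk.
have mem : (k0 <= (k0 + d).+1 <= k)%N by rewrite dk andbT leqW // leq_addr.
have lt : (k0 < (k0 + d).+1)%N by rewrite ltnS leq_addr.
have [_ _ _ exh _] := same_group ((group_members mem).2 lt).
rewrite big_nat_recr /=; last exact/leqW/leq_addr.
have := IH (ltnW dk); have := descent (k0 + d).+1 Cz; rewrite exh.
have := gap _ mem; have := tstep_gt0 (k0 + d).+1 => t0 g.
have : tstep (k0 + d).+1 * dl <= tstep (k0 + d).+1 * (flev (k0 + d).+1 - f z).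
  by rewrite ler_pM2l.
lra.
Qed.

Section Stall.
Variable K : nat.
Hypothesis no_new : forall k, (K <= k)%N -> ~ new_group k.

Lemma stall_sig d : sig (K + d)%N = sig K + \sum_(K <= i < K + d) ttil i.
Proof.
elim: d => [|d IH]; first by rewrite addn0 big_geq // addr0.
rewrite addnS; case: (same_group (no_new (leq_addr d K))) => _ _ _ _ ->.
by rewrite IH big_nat_recr //= ?leq_addr // addrA.
Qed.

Lemma stall_delta d : delta_at (K + d)%N = delta_at K.
Proof.
elim: d => [|d IH]; first by rewrite addn0.
rewrite addnS; case: (same_group (no_new (leqW (leq_addr d K)))) => _ -> _ _ _.
by rewrite delta_in_succ IH.
Qed.

Lemma stall_drift d (i : 'I_n) :
  `|x (K + d)%N ord0 i - x K ord0 i| <= nu * \sum_(K <= j < K + d) ttil j.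
Proof.
elim: d => [|d IH]; first by rewrite addn0 subrr normr0 big_geq // mulr0.
rewrite addnS big_nat_recr //= ?leq_addr // mulrDr.
case: (same_group (no_new (leq_addr d K))) => _ _ _ exh _.
have := step_coord_le i exh.
have := ler_normD (x (K + d).+1 ord0 i - x (K + d)%N ord0 i)
  (x (K + d)%N ord0 i - x K ord0 i).
by rewrite addrA subrK; lra.
Qed.

(* ... and the path length stays below R, since Step 4 never fires. *)
Lemma stall_path_bounded d : \sum_(K <= i < K + d) ttil i <= Rb.
Proof.
have sle k : (K <= k)%N -> sig k <= Rb.
  move=> Kk; rewrite leNgt; apply/negP => big.
  by apply: (no_new Kk); right; split => // dk; apply: (no_new Kk); left.
by have := sle _ (leq_addr d K); rewrite stall_sig; have := sig_ge0 K; lra.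
Qed.

End Stall.

Section NoGap.
Variables (y : vec) (m : R).
Hypothesis y_in_C : C y.
Hypothesis fy_lt_m : f y < m.
Hypothesis m_le_fx : forall k, m <= f (x k).

Lemma m_le_frec k : m <= frec k.
Proof. by case: (xrec_spec k) => <- [j _ ->]. Qed.

Lemma m_le_fref k : m <= fref k.
Proof. exact: m_le_frec. Qed.

Lemma m_le_fxh k : m <= f (xh k).
Proof. by case: (xh_spec k) => ->; [|case: (xrec_spec k) => ->]; rewrite ?m_le_frec. Qed.

Lemma run_subgrad_bounded (c : vec) (r : R) : 0 < r ->
  exists S, 0 < S /\ forall k, box c r (xh k) -> enorm (s k) <= S.
Proof.
move=> r0; have [S [S0 HS]] := @esubdiff_bounded_on_box R n f c r m (eps 0%N) f_convex r0.
exists S; split=> // k kb; case: (step5 k) => _ _ _ [_ sg] _.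
exact: HS kb (eps_le_init k) (m_le_fxh k) sg.
Qed.

(* Case 1: a stall is impossible: the iterates stay in a box, so the
   t~_k are bounded below and the path length would exceed R. *)
Lemma stall_impossible K : (forall k, (K <= k)%N -> ~ new_group k) -> False.
Proof.
move=> no_new; have n1 := nu_ge1.
have r0 : 0 < nu * Rb by rewrite mulr_gt0 // (lt_le_trans ltr01).
have [S [S0 HS]] := run_subgrad_bounded (x K) r0.
have sK d : enorm (s (K + d)%N) <= S.
  apply: HS => i; case: (same_group (no_new _ (leq_addr d K))) => _ _ _ -> _.
  apply: le_trans (stall_drift no_new d i) _.
  by rewrite ler_pM2l ?(lt_le_trans ltr01) // stall_path_bounded.
set c := blo * (delta_at K / 2) / S.
have c0 : 0 < c by rewrite /c !divr_gt0 // mulr_gt0 // divr_gt0 // delta_at_gt0.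
have cle d : c <= ttil (K + d)%N.
  by rewrite /c -(stall_delta no_new d); apply: ttil_ge.
have [N hN] := exists_nat_gt (Rb / c).
have : N%:R * c <= \sum_(K <= i < K + N) ttil i.
  have -> : N%:R * c = \sum_(K <= i < K + N) c.
    by rewrite sumr_const_nat addKn mulr_natl.
  rewrite big_nat [X in _ <= X]big_nat; apply: ler_sum => i /andP[Ki _].
  by rewrite -(subnKC Ki) cle.
have := stall_path_bounded no_new N.
by move: hN; rewrite ltr_pdivrMr // => hN; lra.
Qed.

(* Case 2: finitely many resets is impossible: delta is eventually constant,
   new groups keep starting by Case 1, each by a drop of delta/2 of the
   reference value, which would go below m. *)
Lemma few_resets_impossible :
  (exists K, forall k, (K <= k)%N -> ~ reset_test k) -> False.
Proof.
case=> K no_reset.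
have dK k : (K <= k)%N -> delta_at k = delta_at K.
  move=> /subnK <-; elim: (k - K)%N => [|d IH]; first by rewrite add0n.
  rewrite addSn delta_kept ?delta_in_succ //.
  by apply: no_reset; rewrite -addSn leq_addl.
have d0 := delta_at_gt0 K.
have drop N : exists k, (K <= k)%N /\ fref k <= fref K - N%:R * (delta_at K / 2).
  elim: N => [|N [k [Kk hk]]]; first by exists K; rewrite mul0r subr0.
  have [[j [kj ng]]|none] := pselect (exists j, (k < j)%N /\ new_group j); last first.
    exfalso; apply: (@stall_impossible k.+1) => j kj ng.
    by apply: none; exists j.
  case: j kj ng => [//|j] kj ng.
  have Kj : (K <= j.+1)%N by apply: leq_trans Kk (ltnW kj).
  have dj : descent_test j.+1 by case: ng => // r; case: (no_reset _ Kj r).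
  exists j.+1; split => //.
  have := fref_drop dj; rewrite (dK j) ?(leq_trans Kk) // => fd.
  by have := @fref_anti k j kj; rewrite -natr1 mulrDl mul1r; lra.
have [N hN] := exists_nat_gt ((fref K - m) / (delta_at K / 2)).
have [k [_ hk]] := drop N.
have := m_le_fref k; move: hN; rewrite ltr_pdivrMr ?divr_gt0 // => hN.
lra.
Qed.

Lemma fejer_step k : delta_at k <= m - f y -> sqn (x k.+1 - y) <= sqn (xh k - y).
Proof.
move=> dk; have := descent k y_in_C; have := tstep_gt0 k; have := m_le_fref k.
rewrite /flev => mf T0 ds.
have : 0 <= tstep k * (fref k - delta_at k - f y).
  by apply: mulr_ge0; [exact: ltW | have := fy_lt_m; lra].
lra.
Qed.

Lemma iterates_bounded K0 : (forall k, (K0 <= k)%N -> delta_at k <= m - f y) ->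
  exists M, 0 <= M /\ forall k, sqn (xh k - y) <= M.
Proof.
move=> small; set M := \sum_(j < K0.+1) sqn (x j - y).
have early j : (j <= K0)%N -> sqn (x j - y) <= M.
  move=> jK; rewrite /M (bigD1 (Ordinal (jK : (j < K0.+1)%N))) //= lerDl.
  by apply: sumr_ge0 => i _; apply: sqn_ge0.
have all_x k j : (j <= k)%N -> sqn (x j - y) <= M.
  elim: k j => [|k IH] j; first by rewrite leqn0 => /eqP ->; apply: early.
  rewrite leq_eqVlt => /orP[/eqP ->|]; last exact: IH.
  have [kK|Kk] := leqP k.+1 K0; first exact: early.
  apply: le_trans (fejer_step (small k Kk)) _.
  case: (xh_spec k) => ->; first exact: IH.
  by case: (xrec_spec k) => _ [j' ? ->]; apply: IH.
exists M; split; first by apply: sumr_ge0 => j _; apply: sqn_ge0.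
move=> k; case: (xh_spec k) => ->; first exact: all_x (leqnn k).
by case: (xrec_spec k) => _ [j ? ->]; apply: all_x.
Qed.

(* The heart of the argument: in a group starting once delta <= (m - f y)/2,
   the stepsizes t_k sum to O(delta).  Apply the telescoped descent with
   the point z of [y, xh_{k(l)}] whose value is 2 delta below the record. *)
Lemma group_steps_bound K0 M k :
  (forall j, (K0 <= j)%N -> delta_at j <= (m - f y) / 2) ->
  (forall j, sqn (xh j - y) <= M) -> (K0 <= kstart k)%N ->
  (m - f y) ^+ 2 * \sum_(kstart k <= i < k.+1) tstep i <= 2 * delta_at k * M.
Proof.
move=> small bnd K0k; set k0 := kstart k; set G := m - f y.
have G0 : 0 < G by rewrite /G subr_gt0.
have k0k : (k0 <= k)%N := kstart_le k.
set dl := delta_at k0.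
have dl0 : 0 < dl := delta_at_gt0 k0.
have dlG : dl <= G / 2 by apply: small.
have fp : f (xh k0) <= frec k0 by apply/group_start_le/kstart_idem.
have fk0 : m <= frec k0 := m_le_frec k0.
set la := 2 * dl / G.
have la0 : 0 <= la by rewrite /la divr_ge0 // ?mulr_ge0 // ltW.
have la1 : la <= 1 by rewrite /la ler_pdivrMr //; lra.
have laG : la * G = 2 * dl by rewrite /la mulfVK // gt_eqF.
set z := la *: y + (1 - la) *: xh k0.
have Cz : C z by apply: convex_set_comb => //; apply: xh_in_C.
have fz : f z <= frec k0 - 2 * dl.
  have cz := convex_fun_le f_convex y (xh k0) la0 la1.
  have : (1 - la) * f (xh k0) <= (1 - la) * frec k0 by rewrite ler_wpM2l // subr_ge0.
  have : la * m <= la * frec k0 by rewrite ler_wpM2l.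
  have : la * f y = la * m - la * G by rewrite /G; ring.
  by move: cz; rewrite -/z; lra.
have gap j : (k0 <= j <= k)%N -> dl <= flev j - f z.
  by move=> mem; rewrite (group_level mem) -/k0 -/dl; lra.
set T := \sum_(k0 <= i < k.+1) tstep i.
have := group_telescope Cz gap; rewrite -/T.
have -> : xh k0 - z = la *: (xh k0 - y) by apply/rowP => i; rewrite !mxE; ring.
rewrite dotpZl dotpZr => tele.
have i1 : 2 * dl * T <= la ^+ 2 * M.
  have : la * (la * sqn (xh k0 - y)) <= la ^+ 2 * M.
    by rewrite mulrA -expr2 ler_wpM2l ?sqr_ge0.
  by have := sqn_ge0 (x k.+1 - z); lra.
have : 2 * dl * (G ^+ 2 * T) <= 2 * dl * (2 * dl * M).
  have e : 2 * dl * (2 * dl * M) = G ^+ 2 * (la ^+ 2 * M) by rewrite -laG; ring.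
  rewrite e mulrCA ler_wpM2l ?sqr_ge0 //.
have dk : delta_at k = dl by apply: group_delta; rewrite kstart_le leqnn.
by rewrite dk ler_pM2l // mulr_gt0.
Qed.

(* Case 3: infinitely many resets is impossible: delta -> 0, the iterates
   and subgradients stay bounded, so by the previous lemma a group started
   late has path length O(delta) < R, and Step 4 can no longer fire. *)
Lemma many_resets_impossible :
  (forall K, exists k, (K <= k)%N /\ reset_test k) -> False.
Proof.
move=> resets; set G := m - f y; have G0 : 0 < G by rewrite subr_gt0.
have [K0 small] := delta_vanishes resets (divr_gt0 G0 (ltr0Sn _ 1)).
have [M [M0 bnd]] : exists M, 0 <= M /\ forall k, sqn (xh k - y) <= M.
  by apply: (@iterates_bounded K0) => k /small; have := G0; rewrite /G; lra.
have [S [S0 sb]] := run_subgrad_bounded y (ltr_pwDr ltr01 M0).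
have sS k : enorm (s k) <= S.
  by apply: sb => i; have := coord_le_sqn_add1 i (bnd k); rewrite !mxE.
set dd := Rb * G ^+ 2 / (2 * S * M + 1).
have SM : 0 <= 2 * S * M by rewrite !mulr_ge0 // ltW.
have dd0 : 0 < dd.
  have RG : 0 < Rb * G ^+ 2 by rewrite mulr_gt0 // exprn_gt0.
  by rewrite /dd; apply: divr_gt0 => //; lra.
have [K1 tiny] := delta_vanishes resets dd0.
have [k2 [k2K r2]] := resets (maxn K0 K1).
have [[|k3] [k23 r3]] := resets k2.+1; first by [].
set k0 := kstart k3.
have k2k0 : (k2 <= k0)%N by rewrite -(new_group_start (or_intror r2)).1 kstart_mono.
have K0k0 : (K0 <= k0)%N by apply: leq_trans k2k0; apply: leq_trans k2K; apply: leq_maxl.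
have K1k3 : (K1 <= k3)%N.
  apply: leq_trans (kstart_le k3); apply: leq_trans k2k0.
  by apply: leq_trans k2K; apply: leq_maxr.
have steps := group_steps_bound small bnd K0k0.
have path : Rb < S * \sum_(k0 <= i < k3.+1) tstep i.
  case: r3 => _; rewrite sig_sum kstart_in_succ => r3.
  apply: lt_le_trans r3 _; rewrite mulr_sumr; apply: ler_sum => i _.
  by rewrite ttil_tstep mulrC ler_pM2r ?tstep_gt0.
have d3 := delta_at_gt0 k3.
have : delta_at k3 * (2 * S * M + 1) <= Rb * G ^+ 2.
  by rewrite -ler_pdivlMr ?tiny //; lra.
have : G ^+ 2 * (S * \sum_(k0 <= i < k3.+1) tstep i) <= S * (2 * delta_at k3 * M).
  by rewrite mulrCA ler_pM2l.
have : G ^+ 2 * Rb < G ^+ 2 * (S * \sum_(k0 <= i < k3.+1) tstep i).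
  by rewrite ltr_pM2l ?exprn_gt0.
nra.
Qed.

Lemma no_gap_below_iterates : False.
Proof.
case: (pselect (exists K, forall k, (K <= k)%N -> ~ reset_test k)) => few.
  exact: few_resets_impossible.
apply: many_resets_impossible => K; apply: contrapT => none; apply: few.
by exists K => k Kk rk; apply: none; exists k.
Qed.

End NoGap.

End Run.

Lemma ereal_inf_seq_eq {R : realType} {T : Type} (g : T -> R) (C : set T)
    (u : nat -> T) :
  (forall k, C (u k)) ->
  (forall y m, C y -> g y < m -> (forall k, m <= g (u k)) -> False) ->
  ereal_inf [set (g (u k))%:E | k in [set: nat]] = ereal_inf [set (g y)%:E | y in C].
Proof.
move=> uC no_gap; apply/eqP; rewrite eq_le; apply/andP; split.
  apply/ereal_infP => _ [y Cy <-]; rewrite leNgt; apply/negP => lt.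
  have [m [gym hm]] : exists m, g y < m /\
      (m%:E <= ereal_inf [set (g (u k))%:E | k in [set: nat]])%E.
    move: lt; case: (ereal_inf _) => [r| |] // lt.
    - by exists r; split => //; rewrite -lte_fin.
    - by exists (g y + 1); split; [rewrite ltrDl | rewrite leey].
  apply: (no_gap y m Cy gym) => k; rewrite -lee_fin; apply: le_trans hm _.
  by apply: ereal_inf_lbound; exists k.
apply/ereal_infP => _ [k _ <-].
by apply: ereal_inf_lbound; exists (u k).
Qed.

Theorem mainTheorem10 (R : realType) (n : nat)
  (f : 'rV[R]_n -> R) (C : set 'rV[R]_n)
  (gbar thbar lbar mu blo bhi Rb delta0 : R)
  (gamma theta lambda : nat -> R)
  (phi : nat -> 'rV[R]_n -> 'rV[R]_n -> 'rV[R]_n -> R)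
  (x xh : nat -> 'rV[R]_n) (frec : nat -> R) (xrec : nat -> 'rV[R]_n)
  (ell kl : nat -> nat) (delta sig beta eps : nat -> R)
  (s : nat -> 'rV[R]_n) :
  convex_function [set: 'rV[R]_n] f -> convex_set C -> closed (C : set 'M[R^o]_(1, n)) -> C !=set0 ->
  0 <= gbar -> 0 <= thbar < 1 / 2 -> 0 <= lbar < 1 / 2 ->
  (forall k, 0 <= gamma k < gbar) ->
  (forall k, 0 <= theta k < thbar) ->
  (forall k, 0 <= lambda k < lbar) ->
  0 <= mu ->
  0 < blo -> blo <= bhi ->
  bhi < 2 / (2 * mu + (1 + 2 * gbar) / (1 - 2 * lbar)) ->
  SInexPD_run f C Rb delta0 mu blo bhi gamma theta lambda phi
    x xh frec xrec ell kl delta sig beta eps s ->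
  ereal_inf [set (f (x k))%:E | k in [set: nat]]
  = ereal_inf [set (f y)%:E | y in C].
Proof.
move=> f_cvx C_cvx _ _ hg hth hl hgk hthk hlk hmu hblo _ hbhi run.
case: run => [[x0C d0 Rb0 dinit [klinit siginit]] [frec0 frecN frecK] _ steps step5].
apply: ereal_inf_seq_eq => [|y m Cy fym above].
  exact: (@x_in_C R n f C mu blo bhi gamma theta lambda phi x xh frec ell kl
    delta beta eps s x0C step5).
apply: (no_gap_below_iterates f_cvx C_cvx hg hth hl hgk hthk hlk hmu hblo hbhi
  x0C d0 Rb0 dinit klinit siginit frec0 frecN frecK _ _ _ step5 Cy fym above).
- by move=> k; case: (steps k).
- by move=> k; case: (steps k).
- by move=> k; case: (steps k).
Qed.
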